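(* Fix a target task and the data below, and for $(\mu,f)\in\mathcal{P}(\mathcal{X}_S)\times A_S$ let $$\mathcal{C}(\mu,f):=\inf_{T_0^X\in\mathbb{T}_0^X,\;T_0^Y\in\mathbb{T}_0^Y} C\Big(\mathcal{E}^O\big(T_0^Y(\cdot,f(T_0^X(\cdot)))\big),\;D\big(T_0^X\#\mathrm{Law}(X_T),\mu\big)\Big).$$ Assume there is a constant $L_Y>0$ such that for every $T_0^Y\in\mathbb{T}_0^Y$, $$\|T_0^Y(x_1,y_1)-T_0^Y(x_2,y_2)\|_{\mathcal{Y}_T}\le L_Y\big(\|x_1-x_2\|_{\mathcal{X}_T}+\|y_1-y_2\|_{\mathcal{Y}_S}\big)\quad\forall (x_1,y_1),(x_2,y_2)\in\mathcal{X}_T\times\mathcal{Y}_S,$$ and assume there are $L'>0$ and $p\ge1$ such that $$|\mathcal{E}^O(h_1)-\mathcal{E}^O(h_2)|\le L'\,\mathcal{W}_p\big(h_1\#\mathrm{Law}(X_T),h_2\#\mathrm{Law}(X_T)\big)^p$$ for all intermediate models $h_1,h_2$, i.e. all functions of the form $x\mapsto T_0^Y(x,f(T_0^X(x)))$ with $f\in A_S$, $T_0^X\in\mathbb{T}_0^X$, $T_0^Y\in\mathbb{T}_0^Y$. Then for every fixed $\mu\in\mathcal{P}(\mathcal{X}_S)$, the map $f\mapsto\mathcal{C}(\mu,f)$ is continuous on $(A_S,d_M)$.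
   Context: $(\mathcal{X}_T,\|\cdot\|_{\mathcal{X}_T})$, $(\mathcal{Y}_T,\|\cdot\|_{\mathcal{Y}_T})$, $(\mathcal{X}_S,\|\cdot\|_{\mathcal{X}_S})$, $(\mathcal{Y}_S,\|\cdot\|_{\mathcal{Y}_S})$ are Banach spaces; $X_T$ is an $\mathcal{X}_T$-valued random variable. $A_S$ is a set of functions $\mathcal{X}_S\to\mathcal{Y}_S$, $A_T$ a set of functions $\mathcal{X}_T\to\mathcal{Y}_T$. $\mathbb{T}_0^X$ is a nonempty set of maps $\mathcal{X}_T\to\mathcal{X}_S$ and $\mathbb{T}_0^Y$ a nonempty set of maps $\mathcal{X}_T\times\mathcal{Y}_S\to\mathcal{Y}_T$ such that all intermediate models (as defined in the claim) lie in $A_T$. $\mathcal{E}^O:A_T\to[0,\infty)$ is an output transport risk. $D$ is a metric on the set $\mathcal{P}(\mathcal{X}_S)$ of probability measures on $\mathcal{X}_S$, and $\#$ denotes pushforward. $C:\mathbb{R}\times\mathbb{R}\to\mathbb{R}$ satisfies $C(0,0)=0$, is non-decreasing in each argument, and there is $L>0$ with $|C(a,b)-C(a',b')|\le L(|a-a'|+|b-b'|)$ for all $a,a',b,b'\ge0$. For a fixed constant $M>0$, $d_M(f_1,f_2):=\min\{M,\sup_{x\in\mathcal{X}_S}\|f_1(x)-f_2(x)\|_{\mathcal{Y}_S}\}$ is a metric on $A_S$. $\mathcal{W}_p(\mu,\nu)^p=\inf_{\gamma\in\Pi(\mu,\nu)}\int\|x-y\|_{\mathcal{Y}_T}^p\gamma(dx,dy)$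 over couplings of probability measures on $\mathcal{Y}_T$. *)

From HB Require Import structures.
From mathcomp Require Import all_boot all_order all_algebra.
From mathcomp Require Import all_classical all_reals all_analysis.
Set Implicit Arguments. Unset Strict Implicit. Unset Printing Implicit Defensive.
Import Order.TTheory GRing.Theory Num.Theory.
Import numFieldNormedType.Exports.
Local Open Scope classical_set_scope.
Local Open Scope ring_scope.

Notation borelT V := (g_sigma_algebraType (@open V)).

(* When f is measurable this is
   the genuine pushforward probability (mathcomp's [distribution]); otherwise
   (never used under the hypotheses of the theorem) a default probability. *)
Definition push d d' (T : measurableType d) (T' : measurableType d')
  (R : realType) (P : probability T R) (f : T -> T') : probability T' R :=
  match pselect (measurable_fun [set: T] f) with
  | left mf =>
      Probability.clone _ _ _
        (distribution P (MeasurableFun.Pack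
           (MeasurableFun.Class (isMeasurableFun.Build _ _ _ _ _ mf)))) _
  | right _ => point
  end.

Definition Law d d' (Omega : measurableType d) (T : measurableType d')
  (R : realType) (P : probability Omega R) (X : Omega -> T) : probability T R :=
  push P X.

Section defs.
Context {R : realType}.

Definition couplings (Y : normedModType R) (nu1 nu2 : probability (borelT Y) R)
  : set (probability (borelT Y * borelT Y)%type R) :=
  [set g | forall A : set (borelT Y), measurable A ->
      g (fst @^-1` A) = nu1 A /\ g (snd @^-1` A) = nu2 A].

Definition Wp_pow (Y : normedModType R) (p : R) (nu1 nu2 : probability (borelT Y) R)
  : \bar R :=
  ereal_inf [set (\int[g]_z ((`| (z.1 : Y) - (z.2 : Y) | `^ p)%:E))%E
            | g in couplings nu1 nu2].

Definition imodel (XT XS YS YT : Type) (f : XS -> YS) (TX : XT -> XS)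
  (TY : XT -> YS -> YT) : XT -> YT := fun x => TY x (f (TX x)).

Definition is_intermediate (XT XS YS YT : Type) (A_S : set (XS -> YS))
  (T0X : set (XT -> XS)) (T0Y : set (XT -> YS -> YT)) (h : XT -> YT) : Prop :=
  exists f TX TY, [/\ A_S f, T0X TX, T0Y TY & h = imodel f TX TY].

Definition dM (XS YS : normedModType R) (M : R) (f1 f2 : XS -> YS) : R :=
  fine (Order.min M%:E (ereal_sup [set (`| f1 x - f2 x |)%:E | x in [set: XS]])).

Definition Ccal (XT YT XS YS : normedModType R)
  (LawXT : probability (borelT XT) R)
  (T0X : set (XT -> XS)) (T0Y : set (XT -> YS -> YT))
  (E : (XT -> YT) -> R)
  (D : probability (borelT XS) R -> probability (borelT XS) R -> R)
  (C : R -> R -> R) (mu : probability (borelT XS) R) (f : XS -> YS) : \bar R :=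
  ereal_inf [set z | exists TX TY, [/\ T0X TX, T0Y TY &
     z = (C (E (imodel f TX TY))
            (D (push LawXT (TX : borelT XT -> borelT XS)) mu))%:E]].

End defs.

From HB Require Import structures.
From mathcomp Require Import all_boot all_order all_algebra.
From mathcomp Require Import all_classical all_reals all_analysis.
From mathcomp Require Import ring lra.
Import Order.TTheory GRing.Theory Num.Theory.
Import numFieldNormedType.Exports.
Local Open Scope classical_set_scope.
Local Open Scope ring_scope.

(* If [f] and [g] are uniformly [r]-close, then so are the intermediate models
   built from them with the same transports, up to the Lipschitz constant of
   [T0Y] in its second argument.  Coupling the two pushforwards of Law(X_T)
   through the pair map [x |-> (h_f x, h_g x)] bounds W_p^p by [(L_Y r)^p], so
   the hypothesis on E^O makes [f |-> E^O(h_f)] uniformly continuous, uniformly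
   in the transports.  Since [C] is Lipschitz in its first argument and the
   second argument [D(T0X # Law(X_T), mu)] does not depend on [f], the two
   functions of [(T0X, T0Y)] whose infima are [C(mu, f)] and [C(mu, g)] are
   uniformly close, and hence so are their infima. *)

Section pushforward.
Import HBNNSimple.
Context {R : realType} d d' (T : measurableType d) (T' : measurableType d').

Lemma pushE (P : probability T R) (f : T -> T') : measurable_fun [set: T] f ->
  forall A, push P f A = P (f @^-1` A).
Proof. by move=> mf A; rewrite /push; case: pselect. Qed.

(* [F] is not assumed measurable ([|z.1 - z.2|^p] need not be for the product
   of two Borel sigma-algebras): the integral of a nonnegative function is the
   supremum of the integrals of the simple functions below it, and those
   transport along [H]. *)
Lemma ge0_integral_push_le_cst (P : probability T R) (H : T -> T')
    (F : T' -> \bar R) (c : R) :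
  measurable_fun [set: T] H -> 0 <= c -> (forall z, (0 <= F z)%E) ->
  (forall x, (F (H x) <= c%:E)%E) -> (\int[push P H]_z F z <= c%:E)%E.
Proof.
move=> mH c0 F0 FHc; rewrite ge0_integralTE//.
apply/ge_ereal_sup => _ [h /= hF <-]; rewrite -integralT_nnsfun.
rewrite /push; case: pselect => // mH' /=.
rewrite ge0_integral_pushforward //= ?preimage_setT; first last.
- by move=> y _; rewrite lee_fin.
- by apply/measurable_realfun.measurable_EFinP; exact: measurable_funPT.
apply: (@le_trans _ _ (\int[P]_x (cst c%:E) x)%E).
  apply: ge0_le_integral => //.
  - by move=> x _; rewrite /= lee_fin.
  - apply/measurable_realfun.measurable_EFinP.
    by apply: measurableT_comp => //; exact: measurable_funPT.
  - by move=> x _ /=; apply: le_trans (hF (H x)) (FHc x).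
by rewrite integral_cst //; have /= -> := probability_setT P; rewrite mule1.
Qed.

End pushforward.

Lemma Wp_pow_push_le {R : realType} (X Y : normedModType R)
    (Q : probability (borelT X) R) (h1 h2 : X -> Y) (p c : R) :
  measurable_fun [set: borelT X] (h1 : borelT X -> borelT Y) ->
  measurable_fun [set: borelT X] (h2 : borelT X -> borelT Y) ->
  0 <= p -> 0 <= c -> (forall x, `|h1 x - h2 x| <= c) ->
  (Wp_pow p (push Q (h1 : borelT X -> borelT Y)) (push Q (h2 : borelT X -> borelT Y))
    <= (c `^ p)%:E)%E.
Proof.
move=> m1 m2 p0 c0 h12.
pose H (x : borelT X) := ((h1 x : borelT Y), (h2 x : borelT Y)).
have mH : measurable_fun [set: borelT X] H by exact: measurable_fun_pair.
apply: (@le_trans _ _ (\int[push Q H]_z ((`|(z.1 : Y) - z.2| `^ p)%:E))%E).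
  by apply: ereal_inf_lbound; exists (push Q H) => // A mA; rewrite !pushE.
apply: ge0_integral_push_le_cst => //; first exact: powR_ge0.
by move=> x; rewrite lee_fin; apply: ge0_ler_powR; rewrite ?nnegrE ?h12.
Qed.

Lemma dM_lt_norm {R : realType} (XS YS : normedModType R) (M r : R)
    (f g : XS -> YS) :
  r <= M -> dM M f g < r -> forall x, `|f x - g x| < r.
Proof.
move=> rM dM_r x; rewrite ltNge; apply: contraTN dM_r => rfg.
pose S := ereal_sup [set (`|f y - g y|)%:E | y in [set: XS]].
pose m := Order.min M%:E S.
have r_S : (r%:E <= S)%E.
  apply: (@le_trans _ _ (`|f x - g x|)%:E); first by rewrite lee_fin.
  by apply: ereal_sup_ubound; exists x.
have r_m : (r%:E <= m)%E by rewrite le_min lee_fin rM r_S.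
have m_M : (m <= M%:E)%E by rewrite ge_min lexx.
by rewrite /dM -/S -/m -leNgt; case: m r_m m_M => [m'| |] //; rewrite !lee_fin.
Qed.

Section ereal_inf2.
Context {R : realType} {A B : Type} (SA : set A) (SB : set B).

Definition ereal_inf2 (F : A -> B -> R) : \bar R :=
  ereal_inf [set z | exists a b, [/\ SA a, SB b & z = (F a b)%:E]].

Lemma ereal_inf2_le_addr (F G : A -> B -> R) (K : R) :
  (forall a b, SA a -> SB b -> F a b <= G a b + K) ->
  (ereal_inf2 F <= ereal_inf2 G + K%:E)%E.
Proof.
move=> FG; rewrite -leeBlDr //; apply: le_ereal_inf_tmp => _ [a [b [Aa Bb ->]]].
rewrite leeBlDr // -EFinD; apply: le_trans (ereal_inf_lbound _) _.
  by exists a, b.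
by rewrite lee_fin FG.
Qed.

Lemma ereal_inf2_fin_num (F : A -> B -> R) (m : R) :
  SA !=set0 -> SB !=set0 -> (forall a b, SA a -> SB b -> m <= F a b) ->
  ereal_inf2 F \is a fin_num.
Proof.
move=> [a Aa] [b Bb] mF.
have m_le : (m%:E <= ereal_inf2 F)%E.
  by apply: le_ereal_inf_tmp => _ [a' [b' [? ? ->]]]; rewrite lee_fin mF.
have le_Fab : (ereal_inf2 F <= (F a b)%:E)%E.
  by apply: ereal_inf_lbound; exists a, b.
by move: m_le le_Fab; case: (ereal_inf2 F).
Qed.

Lemma abse_ereal_inf2_sub_le (F G : A -> B -> R) (m K : R) :
  SA !=set0 -> SB !=set0 ->
  (forall a b, SA a -> SB b -> m <= F a b) ->
  (forall a b, SA a -> SB b -> m <= G a b) ->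
  (forall a b, SA a -> SB b -> `|F a b - G a b| <= K) ->
  (`|ereal_inf2 F - ereal_inf2 G| <= K%:E)%E.
Proof.
move=> SA0 SB0 mF mG FG.
have /fineK eF := ereal_inf2_fin_num _ _ SA0 SB0 mF.
have /fineK eG := ereal_inf2_fin_num _ _ SA0 SB0 mG.
have FG_le : (ereal_inf2 F <= ereal_inf2 G + K%:E)%E.
  apply: ereal_inf2_le_addr => a b Aa Bb.
  by have := FG a b Aa Bb; rewrite ler_norml => /andP[]; lra.
have GF_le : (ereal_inf2 G <= ereal_inf2 F + K%:E)%E.
  apply: ereal_inf2_le_addr => a b Aa Bb.
  by have := FG a b Aa Bb; rewrite ler_norml => /andP[]; lra.
move: FG_le GF_le; rewrite -eF -eG -EFinB -!EFinD abse_EFin !lee_fin ler_norml.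
by move=> FG_le GF_le; apply/andP; split; lra.
Qed.

End ereal_inf2.

Section intermediate_models.
Context {R : realType} {XT YT XS YS : normedModType R}.
Context {Q : probability (borelT XT) R} {A_S : set (XS -> YS)}.
Context {T0X : set (XT -> XS)} {T0Y : set (XT -> YS -> YT)}.
Context {E : (XT -> YT) -> R} {L' p LY : R}.
Hypotheses (L'_ge0 : 0 <= L') (p_ge0 : 0 <= p) (LY_ge0 : 0 <= LY).
Hypothesis measurable_intermediate : forall h, is_intermediate A_S T0X T0Y h ->
  measurable_fun [set: borelT XT] (h : borelT XT -> borelT YT).
Hypothesis E_Wp_lipschitz : forall h1 h2,
  is_intermediate A_S T0X T0Y h1 -> is_intermediate A_S T0X T0Y h2 ->
  ((`|E h1 - E h2|)%:E <= L'%:E *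
     Wp_pow p (push Q (h1 : borelT XT -> borelT YT))
              (push Q (h2 : borelT XT -> borelT YT)))%E.
Hypothesis T0Y_lipschitz : forall TY, T0Y TY ->
  forall x y1 y2, `|TY x y1 - TY x y2| <= LY * `|y1 - y2|.

Lemma E_imodel_sub_le f g TX TY (r : R) :
  A_S f -> A_S g -> T0X TX -> T0Y TY -> 0 <= r -> (forall y, `|f y - g y| <= r) ->
  `|E (imodel f TX TY) - E (imodel g TX TY)| <= L' * (LY * r) `^ p.
Proof.
move=> Af Ag TX0 TY0 r0 fg.
have If : is_intermediate A_S T0X T0Y (imodel f TX TY) by exists f, TX, TY.
have Ig : is_intermediate A_S T0X T0Y (imodel g TX TY) by exists g, TX, TY.
rewrite -lee_fin EFinM; apply: le_trans (E_Wp_lipschitz _ _ If Ig) _.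
apply: lee_wpmul2l; first by rewrite lee_fin.
apply: Wp_pow_push_le; [exact: measurable_intermediate..|done|exact: mulr_ge0|].
by move=> x; rewrite /imodel (le_trans (T0Y_lipschitz _ TY0 _ _ _)) ?ler_wpM2l.
Qed.

Variables (D : probability (borelT XS) R -> probability (borelT XS) R -> R).
Variables (C : R -> R -> R) (mu : probability (borelT XS) R) (L : R).
Hypotheses (T0X_n0 : T0X !=set0) (T0Y_n0 : T0Y !=set0) (L_ge0 : 0 <= L).
Hypothesis E_ge0 : forall h, is_intermediate A_S T0X T0Y h -> 0 <= E h.
Hypothesis D_ge0 : forall m1 m2, 0 <= D m1 m2.
Hypothesis C_ge0 : forall a b, 0 <= a -> 0 <= b -> 0 <= C a b.
Hypothesis C_lipschitz_l : forall a a' b, 0 <= a -> 0 <= a' -> 0 <= b ->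
  `|C a b - C a' b| <= L * `|a - a'|.

Lemma abse_Ccal_sub_le f g (r : R) :
  A_S f -> A_S g -> 0 <= r -> (forall y, `|f y - g y| <= r) ->
  (`|Ccal Q T0X T0Y E D C mu f - Ccal Q T0X T0Y E D C mu g|
     <= (L * (L' * (LY * r) `^ p))%:E)%E.
Proof.
move=> Af Ag r0 fg.
have E_imodel_ge0 h TX TY : A_S h -> T0X TX -> T0Y TY -> 0 <= E (imodel h TX TY).
  by move=> Ah TX0 TY0; apply: E_ge0; exists h, TX, TY.
apply: (abse_ereal_inf2_sub_le _ _ _ _ 0 _ T0X_n0 T0Y_n0) => TX TY TX0 TY0.
- by apply: C_ge0; [exact: E_imodel_ge0|exact: D_ge0].
- by apply: C_ge0; [exact: E_imodel_ge0|exact: D_ge0].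
apply: le_trans (C_lipschitz_l _ _ _ _ _ (D_ge0 _ _)) _; try exact: E_imodel_ge0.
by apply: ler_wpM2l => //; exact: E_imodel_sub_le.
Qed.

End intermediate_models.

Theorem proposition7 (R : realType) (XT YT XS YS : completeNormedModType R)
  (dO : measure_display) (Omega : measurableType dO) (P : probability Omega R)
  (X_T : Omega -> borelT XT) (mX_T : measurable_fun [set: Omega] X_T)
  (A_S : set (XS -> YS)) (A_T : set (XT -> YT))
  (T0X : set (XT -> XS)) (T0Y : set (XT -> YS -> YT))
  (E : (XT -> YT) -> R)
  (D : probability (borelT XS) R -> probability (borelT XS) R -> R)
  (C : R -> R -> R) (M : R) :
  (* standing assumptions *)
  T0X !=set0 -> T0Y !=set0 ->
  (forall h, is_intermediate A_S T0X T0Y h -> A_T h) ->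
  (forall h, A_T h -> 0 <= E h) ->
  (* measurability implicit in the pushforwards T0X # Law(X_T), h # Law(X_T) *)
  (forall TX, T0X TX -> measurable_fun [set: borelT XT] (TX : borelT XT -> borelT XS)) ->
  (forall h, is_intermediate A_S T0X T0Y h ->
     measurable_fun [set: borelT XT] (h : borelT XT -> borelT YT)) ->
  (* D is a metric on P(X_S) *)
  (forall m1 m2, 0 <= D m1 m2) ->
  (forall m1 m2, D m1 m2 = 0 <-> m1 = m2) ->
  (forall m1 m2, D m1 m2 = D m2 m1) ->
  (forall m1 m2 m3, D m1 m3 <= D m1 m2 + D m2 m3) ->
  (* properties of C *)
  C 0 0 = 0 ->
  (forall a a' b, a <= a' -> C a b <= C a' b) ->
  (forall a b b', b <= b' -> C a b <= C a b') ->
  (exists2 L : R, 0 < L & forall a a' b b', 0 <= a -> 0 <= a' -> 0 <= b -> 0 <= b' ->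
     `|C a b - C a' b'| <= L * (`|a - a'| + `|b - b'|)) ->
  0 < M ->
  (* Lipschitz assumption on T0Y *)
  (exists2 LY : R, 0 < LY & forall TY, T0Y TY -> forall (x1 x2 : XT) (y1 y2 : YS),
     `|TY x1 y1 - TY x2 y2| <= LY * (`|x1 - x2| + `|y1 - y2|)) ->
  (* Wasserstein-Lipschitz assumption on E^O over intermediate models *)
  (exists L' : R, exists2 p : R, 0 < L' /\ 1 <= p &
     forall h1 h2, is_intermediate A_S T0X T0Y h1 -> is_intermediate A_S T0X T0Y h2 ->
       ((`|E h1 - E h2|)%:E <= L'%:E *
          Wp_pow p (push (Law P X_T) (h1 : borelT XT -> borelT YT))
                   (push (Law P X_T) (h2 : borelT XT -> borelT YT)))%E) ->
  (* conclusion: f |-> C(mu, f) is continuous on (A_S, d_M) *)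
  forall mu : probability (borelT XS) R,
  forall f, A_S f -> forall eps : R, 0 < eps ->
    exists2 delta : R, 0 < delta & forall g, A_S g -> dM M f g < delta ->
      (`|Ccal (Law P X_T) T0X T0Y E D C mu f - Ccal (Law P X_T) T0X T0Y E D C mu g| < eps%:E)%E.
Proof.
move=> T0X_n0 T0Y_n0 intermediate_A_T E_ge0 _ measurable_h D_ge0 _ _ _ C00 C_homo_l
  C_homo_r [L L_gt0 C_lip] M_gt0 [LY LY_gt0 TY_lip] [L' [p [L'_gt0 p_ge1] E_lip]]
  mu f Af eps eps_gt0.
have C_ge0 a b : 0 <= a -> 0 <= b -> 0 <= C a b.
  by move=> a0 b0; rewrite -C00 (le_trans (C_homo_r _ _ _ b0)) ?C_homo_l.
have C_lip_l a a' b : 0 <= a -> 0 <= a' -> 0 <= b -> `|C a b - C a' b| <= L * `|a - a'|.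
  by move=> a0 a'0 b0; have := C_lip _ _ _ _ a0 a'0 b0 b0; rewrite subrr normr0 addr0.
have TY_lip_r TY : T0Y TY -> forall x y1 y2, `|TY x y1 - TY x y2| <= LY * `|y1 - y2|.
  by move=> /TY_lip lip x y1 y2; have := lip x x y1 y2; rewrite subrr normr0 add0r.
pose K := L * L' * LY.
have K_gt0 : 0 < K by rewrite !mulr_gt0.
(* [LY * delta <= 1] gives [(LY * delta) `^ p <= LY * delta], as [1 <= p]. *)
pose delta := Num.min M (Num.min LY^-1 (eps / (2 * K))).
have delta_gt0 : 0 < delta by rewrite !lt_min M_gt0 invr_gt0 LY_gt0 divr_gt0 ?mulr_gt0.
have LY_delta : 0 < LY * delta <= 1.
  rewrite mulr_gt0 //= -(mulfV (lt0r_neq0 LY_gt0)); apply: ler_wpM2l; first exact: ltW.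
  by rewrite /delta !ge_min lexx orbT.
have K_delta : K * delta <= eps / 2.
  have -> : eps / 2 = K * (eps / (2 * K)) by field; exact: lt0r_neq0.
  by apply: ler_wpM2l; [exact: ltW|rewrite /delta !ge_min lexx !orbT].
exists delta => // g Ag /dM_lt_norm fg_lt.
have fg y : `|f y - g y| <= delta by apply/ltW/fg_lt; rewrite ge_min lexx.
have E_intermediate_ge0 h : is_intermediate A_S T0X T0Y h -> 0 <= E h.
  by move/intermediate_A_T/E_ge0.
have := abse_Ccal_sub_le (ltW L'_gt0) (le_trans ler01 p_ge1) (ltW LY_gt0) measurable_h
  E_lip TY_lip_r D C mu L T0X_n0 T0Y_n0 (ltW L_gt0) E_intermediate_ge0 D_ge0 C_ge0 C_lip_l
  f g delta Af Ag (ltW delta_gt0) fg.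
move/le_lt_trans; apply; rewrite lte_fin; apply: (@le_lt_trans _ _ (K * delta)).
  rewrite /K -!mulrA; apply: ler_wpM2l; first exact: ltW.
  by apply: ler_wpM2l; [exact: ltW|exact: ge1r_powR].
by lra.
Qed.
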